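(* Let $\mathbb W=(W,I,\preccurlyeq,\circ,{}^\sim,{}^-)$ be a DInFL-frame and let $\mathsf{Up}(W,\preccurlyeq)$ be the set of all upsets of $(W,\preccurlyeq)$. For $U\in\mathsf{Up}(W,\preccurlyeq)$ define ${\sim}U=\{w\in W\mid w^-\notin U\}$ and $-U=\{w\in W\mid w^\sim\notin U\}$. Then $\mathsf{Up}(W,\preccurlyeq)$ is closed under $\cap,\cup,\circ,{\sim},-$, contains $I$, and $\mathbb W^+=(\mathsf{Up}(W,\preccurlyeq),\cap,\cup,\circ,I,\sim,-)$ is a distributive InFL-algebra (DInFL-algebra).
   Context: For a set $W$ and a map $\circ:W\times W\to\mathcal P(W)$, extend $\circ$ to subsets by $U\circ V=\bigcup\{a\circ b\mid a\in U,\ b\in V\}$, with $x\circ V=\{x\}\circ V$ and $U\circ y=U\circ\{y\}$. We write $x^{\sim-}$ for $(x^\sim)^-$, etc. A DInFL-frame is a tuple $\mathbb W=(W,I,\preccurlyeq,\circ,{}^\sim,{}^-)$ where $W$ is a set, $I\subseteq W$, $\preccurlyeq$ is a partial order on $W$, $\circ:W\times W\to\mathcal P(W)$, and ${}^\sim,{}^-:W\to W$ are functions, such that for all $u,v,x,y,z\in W$: (F1) $x\preccurlyeq y$ iff $y\in I\circ x$ iff $y\in x\circ I$; (F2) if $x\preccurlyeq y$ and $x\in I$ then $y\in I$; (F3) if $x\preccurlyeq y$ and $x\in u\circ v$ then $y\in u\circ v$; (F4) $(x\circ y)\circ z=x\circ(y\circ z)$; (F5) $z^\sim\in x\circ y$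 iff $y^-\in z\circ x$; (F6) $x^{\sim-}\preccurlyeq x$ and $x^{-\sim}\preccurlyeq x$. An InFL-algebra is a structure $(A,\wedge,\vee,\cdot,1,\sim,-)$ with $(A,\wedge,\vee)$ a lattice, $(A,\cdot,1)$ a monoid, and for all $a,b,c$: $a\cdot b\leqslant c\iff a\leqslant -(b\cdot{\sim}c)\iff b\leqslant{\sim}(-c\cdot a)$. A DInFL-algebra is an InFL-algebra whose lattice reduct is distributive. *)

Set Implicit Arguments.

Definition pset (W : Type) := W -> Prop.

Definition circ_set {W : Type} (circ : W -> W -> pset W) (U V : pset W) : pset W :=
  fun w => exists a b, U a /\ V b /\ circ a b w.

Definition is_partial_order {W : Type} (le : W -> W -> Prop) : Prop :=
  (forall x, le x x) /\
  (forall x y, le x y -> le y x -> x = y) /\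
  (forall x y z, le x y -> le y z -> le x z).

Definition singleton {W : Type} (x : W) : pset W := fun w => w = x.

Definition DInFL_frame (W : Type) (I : pset W) (le : W -> W -> Prop)
    (circ : W -> W -> pset W) (tl mi : W -> W) : Prop :=
  is_partial_order le /\
  (forall x y, (le x y <-> circ_set circ I (singleton x) y) /\
               (circ_set circ I (singleton x) y <-> circ_set circ (singleton x) I y)) /\
  (forall x y, le x y -> I x -> I y) /\
  (forall x y u v, le x y -> circ u v x -> circ u v y) /\
  (forall x y z, circ_set circ (circ x y) (singleton z)
                 = circ_set circ (singleton x) (circ y z)) /\
  (forall x y z, circ x y (tl z) <-> circ z x (mi y)) /\
  (forall x, le (mi (tl x)) x /\ le (tl (mi x)) x).

Definition is_upset {W : Type} (le : W -> W -> Prop) (U : pset W) : Prop :=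
  forall x y, le x y -> U x -> U y.

Definition set_cap {W : Type} (U V : pset W) : pset W := fun w => U w /\ V w.
Definition set_cup {W : Type} (U V : pset W) : pset W := fun w => U w \/ V w.

Definition set_tilde {W : Type} (mi : W -> W) (U : pset W) : pset W :=
  fun w => ~ U (mi w).
Definition set_minus {W : Type} (tl : W -> W) (U : pset W) : pset W :=
  fun w => ~ U (tl w).

Definition InFL_algebra_on {A : Type} (S : A -> Prop)
    (meet join mul : A -> A -> A) (one : A) (tl mi : A -> A) : Prop :=
  let le a b := meet a b = a in
  S one /\
  (forall a b, S a -> S b -> S (meet a b)) /\
  (forall a b, S a -> S b -> S (join a b)) /\
  (forall a b, S a -> S b -> S (mul a b)) /\
  (forall a, S a -> S (tl a)) /\
  (forall a, S a -> S (mi a)) /\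
  (forall a b c, S a -> S b -> S c -> meet a (meet b c) = meet (meet a b) c) /\
  (forall a b c, S a -> S b -> S c -> join a (join b c) = join (join a b) c) /\
  (forall a b, S a -> S b -> meet a b = meet b a) /\
  (forall a b, S a -> S b -> join a b = join b a) /\
  (forall a b, S a -> S b -> meet a (join a b) = a) /\
  (forall a b, S a -> S b -> join a (meet a b) = a) /\
  (forall a b c, S a -> S b -> S c -> mul a (mul b c) = mul (mul a b) c) /\
  (forall a, S a -> mul one a = a /\ mul a one = a) /\
  (forall a b c, S a -> S b -> S c ->
     (le (mul a b) c <-> le a (mi (mul b (tl c)))) /\
     (le a (mi (mul b (tl c))) <-> le b (tl (mul (mi c) a)))).

Definition DInFL_algebra_on {A : Type} (S : A -> Prop)
    (meet join mul : A -> A -> A) (one : A) (tl mi : A -> A) : Prop :=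
  InFL_algebra_on S meet join mul one tl mi /\
  (forall a b c, S a -> S b -> S c ->
     meet a (join b c) = join (meet a b) (meet a c)).

(* By F1 the
   order is "multiplication by some unit", so F5 applied to a unit turns
   x ≼ y into y^- ≼ x^- (and y^~ ≼ x^~); with F6 this makes ^~ and ^- mutually
   inverse antitone bijections.  Hence ~U and -U are upsets, and F5 read on
   subsets is exactly the residuation law. *)
From Stdlib Require Import Classical FunctionalExtensionality PropExtensionality.

Definition set_sub {W : Type} (U V : pset W) : Prop := forall w, U w -> V w.

Lemma pset_ext {W : Type} (U V : pset W) : (forall w, U w <-> V w) -> U = V.
Proof.
  intro H; apply functional_extensionality; intro w.
  apply propositional_extensionality, H.
Qed.

Lemma set_cap_eq_sub {W : Type} (U V : pset W) : set_cap U V = U <-> set_sub U V.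
Proof.
  split.
  - intros H w Hw; rewrite <- H in Hw; apply Hw.
  - intro H; apply pset_ext; intro w; unfold set_cap; split; [tauto | auto].
Qed.

Section SetLattice.
Variable W : Type.
Implicit Types U V Z : pset W.

Lemma set_capA U V Z : set_cap U (set_cap V Z) = set_cap (set_cap U V) Z.
Proof. apply pset_ext; intro; unfold set_cap; tauto. Qed.

Lemma set_cupA U V Z : set_cup U (set_cup V Z) = set_cup (set_cup U V) Z.
Proof. apply pset_ext; intro; unfold set_cup; tauto. Qed.

Lemma set_capC U V : set_cap U V = set_cap V U.
Proof. apply pset_ext; intro; unfold set_cap; tauto. Qed.

Lemma set_cupC U V : set_cup U V = set_cup V U.
Proof. apply pset_ext; intro; unfold set_cup; tauto. Qed.

Lemma set_cap_cupK U V : set_cap U (set_cup U V) = U.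
Proof. apply pset_ext; intro; unfold set_cap, set_cup; tauto. Qed.

Lemma set_cup_capK U V : set_cup U (set_cap U V) = U.
Proof. apply pset_ext; intro; unfold set_cap, set_cup; tauto. Qed.

Lemma set_cap_cupDr U V Z :
  set_cap U (set_cup V Z) = set_cup (set_cap U V) (set_cap U Z).
Proof. apply pset_ext; intro; unfold set_cap, set_cup; tauto. Qed.

End SetLattice.

Section Upsets.
Variables (W : Type) (le : W -> W -> Prop).

Lemma upset_cap (U V : pset W) :
  is_upset le U -> is_upset le V -> is_upset le (set_cap U V).
Proof. intros HU HV x y Hxy [Hx Hy]; split; eauto. Qed.

Lemma upset_cup (U V : pset W) :
  is_upset le U -> is_upset le V -> is_upset le (set_cup U V).
Proof. intros HU HV x y Hxy [Hx | Hx]; [left | right]; eauto. Qed.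

End Upsets.

Section Frame.
Variables (W : Type) (I : pset W) (le : W -> W -> Prop)
  (circ : W -> W -> pset W) (tl mi : W -> W).

Hypothesis le_refl : forall x, le x x.
Hypothesis le_antisym : forall x y, le x y -> le y x -> x = y.
Hypothesis le_circ_unit : forall x y,
  (le x y <-> circ_set circ I (singleton x) y) /\
  (circ_set circ I (singleton x) y <-> circ_set circ (singleton x) I y).
Hypothesis circ_upset : forall x y u v, le x y -> circ u v x -> circ u v y.
Hypothesis circ_assoc : forall x y z,
  circ_set circ (circ x y) (singleton z) = circ_set circ (singleton x) (circ y z).
Hypothesis circ_tl_mi : forall x y z, circ x y (tl z) <-> circ z x (mi y).
Hypothesis mi_tl_le : forall x, le (mi (tl x)) x /\ le (tl (mi x)) x.

Lemma le_iff_circ_unit_r x y : le x y <-> exists i, I i /\ circ x i y.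
Proof.
  destruct (le_circ_unit x y) as [-> ->]; unfold circ_set, singleton; split.
  - intros [a [i [-> [Hi Hc]]]]; eauto.
  - intros [i [Hi Hc]]; exists x, i; auto.
Qed.

Lemma le_iff_circ_unit_l x y : le x y <-> exists i, I i /\ circ i x y.
Proof.
  destruct (le_circ_unit x y) as [-> _]; unfold circ_set, singleton; split.
  - intros [i [a [Hi [-> Hc]]]]; eauto.
  - intros [i [Hi Hc]]; exists i, x; auto.
Qed.

Lemma mi_tl x : mi (tl x) = x.
Proof.
  apply le_antisym; [apply mi_tl_le |].
  destruct (proj1 (le_iff_circ_unit_l _ _) (le_refl (tl x))) as [i [Hi Hc]].
  apply le_iff_circ_unit_r; exists i; split; [| apply circ_tl_mi]; auto.
Qed.

Lemma tl_mi x : tl (mi x) = x.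
Proof.
  apply le_antisym; [apply mi_tl_le |].
  destruct (proj1 (le_iff_circ_unit_r _ _) (le_refl (mi x))) as [i [Hi Hc]].
  apply le_iff_circ_unit_l; exists i; split; [| apply circ_tl_mi]; auto.
Qed.

Lemma mi_antitone x y : le x y -> le (mi y) (mi x).
Proof.
  intro Hxy; destruct (proj1 (le_iff_circ_unit_l _ _) Hxy) as [i [Hi Hc]].
  apply le_iff_circ_unit_r; exists i; split; [| apply circ_tl_mi; rewrite tl_mi]; auto.
Qed.

Lemma tl_antitone x y : le x y -> le (tl y) (tl x).
Proof.
  intro Hxy; destruct (proj1 (le_iff_circ_unit_r _ _) Hxy) as [i [Hi Hc]].
  apply le_iff_circ_unit_l; exists i; split; [| apply circ_tl_mi; rewrite mi_tl]; auto.
Qed.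

Lemma upset_circ_set (U V : pset W) : is_upset le (circ_set circ U V).
Proof. intros x y Hxy [u [v [Hu [Hv Hc]]]]; exists u, v; eauto. Qed.

Lemma upset_set_tilde (U : pset W) : is_upset le U -> is_upset le (set_tilde mi U).
Proof. intros HU x y Hxy Hx Hy; eapply Hx, HU; [apply mi_antitone |]; eauto. Qed.

Lemma upset_set_minus (U : pset W) : is_upset le U -> is_upset le (set_minus tl U).
Proof. intros HU x y Hxy Hx Hy; eapply Hx, HU; [apply tl_antitone |]; eauto. Qed.

Lemma circ_set_assoc (U V Z : pset W) :
  circ_set circ U (circ_set circ V Z) = circ_set circ (circ_set circ U V) Z.
Proof.
  apply pset_ext; intro w; unfold circ_set; split.
  - intros [x [d [Hx [[y [z [Hy [Hz Hd]]]] Hw]]]].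
    assert (Hxyz : circ_set circ (circ x y) (singleton z) w).
    { rewrite circ_assoc; exists x, d; repeat split; auto. }
    destruct Hxyz as [e [z' [He [-> Hw']]]].
    exists e, z; split; [exists x, y |]; auto.
  - intros [e [z [[x [y [Hx [Hy He]]]] [Hz Hw]]]].
    assert (Hxyz : circ_set circ (singleton x) (circ y z) w).
    { rewrite <- circ_assoc; exists e, z; repeat split; auto. }
    destruct Hxyz as [x' [d [-> [Hd Hw']]]].
    exists x, d; split; [| split; [exists y, z |]]; auto.
Qed.

Lemma circ_set_unit_l (U : pset W) : is_upset le U -> circ_set circ I U = U.
Proof.
  intro HU; apply pset_ext; intro w; unfold circ_set; split.
  - intros [i [u [Hi [Hu Hc]]]]; eapply HU; [| exact Hu].
    apply le_iff_circ_unit_l; eauto.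
  - intro Hw; destruct (proj1 (le_iff_circ_unit_l _ _) (le_refl w)) as [i [Hi Hc]].
    exists i, w; auto.
Qed.

Lemma circ_set_unit_r (U : pset W) : is_upset le U -> circ_set circ U I = U.
Proof.
  intro HU; apply pset_ext; intro w; unfold circ_set; split.
  - intros [u [i [Hu [Hi Hc]]]]; eapply HU; [| exact Hu].
    apply le_iff_circ_unit_r; eauto.
  - intro Hw; destruct (proj1 (le_iff_circ_unit_r _ _) (le_refl w)) as [i [Hi Hc]].
    exists w, i; auto.
Qed.

(* The backward directions argue by contradiction with the witness tl w in ~Z
   (resp. mi w in -Z); this is where mi_tl (resp. tl_mi) is needed. *)
Lemma circ_set_sub_minus (U V Z : pset W) :
  set_sub (circ_set circ U V) Z <->
  set_sub U (set_minus tl (circ_set circ V (set_tilde mi Z))).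
Proof.
  unfold set_sub, set_minus, set_tilde, circ_set; split.
  - intros H u Hu [v [x [Hv [Hx Hc]]]]; apply Hx, H.
    exists u, v; repeat split; auto; apply circ_tl_mi; auto.
  - intros H w [u [v [Hu [Hv Hc]]]]; apply NNPP; intro Hw; apply (H u Hu).
    exists v, (tl w); rewrite mi_tl; repeat split; auto.
    apply circ_tl_mi; rewrite mi_tl; auto.
Qed.

Lemma circ_set_sub_tilde (U V Z : pset W) :
  set_sub (circ_set circ U V) Z <->
  set_sub V (set_tilde mi (circ_set circ (set_minus tl Z) U)).
Proof.
  unfold set_sub, set_minus, set_tilde, circ_set; split.
  - intros H v Hv [y [u [Hy [Hu Hc]]]]; apply Hy, H.
    exists u, v; repeat split; auto; apply circ_tl_mi; auto.
  - intros H w [u [v [Hu [Hv Hc]]]]; apply NNPP; intro Hw; apply (H v Hv).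
    exists (mi w), u; rewrite tl_mi; repeat split; auto.
    apply circ_tl_mi; rewrite tl_mi; auto.
Qed.

End Frame.

Theorem mainTheorem4 (W : Type) (I : pset W) (le : W -> W -> Prop)
    (circ : W -> W -> pset W) (tl mi : W -> W) :
  DInFL_frame I le circ tl mi ->
  DInFL_algebra_on (is_upset le) (@set_cap W) (@set_cup W) (circ_set circ) I
    (set_tilde mi) (set_minus tl).
Proof.
  intros [[refl [antisym _]] [F1 [F2 [F3 [F4 [F5 F6]]]]]].
  split; [| intros; apply set_cap_cupDr].
  unfold InFL_algebra_on; cbv zeta.
  repeat match goal with |- _ /\ _ => split end.
  - exact F2.
  - intros U V HU HV; apply upset_cap; assumption.
  - intros U V HU HV; apply upset_cup; assumption.
  - intros U V _ _; apply upset_circ_set; assumption.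
  - intros U HU; eapply upset_set_tilde; eassumption.
  - intros U HU; eapply upset_set_minus; eassumption.
  - intros; apply set_capA.
  - intros; apply set_cupA.
  - intros; apply set_capC.
  - intros; apply set_cupC.
  - intros; apply set_cap_cupK.
  - intros; apply set_cup_capK.
  - intros; apply circ_set_assoc; assumption.
  - intros U HU; split; [eapply circ_set_unit_l | eapply circ_set_unit_r]; eassumption.
  - intros U V Z _ _ _; rewrite !set_cap_eq_sub.
    erewrite <- circ_set_sub_minus, <- circ_set_sub_tilde by eassumption.
    tauto.
Qed.
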